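(* Let $\lambda_0 \geq 0 > \lambda_1$ be real numbers and let $z_1, z_2, z_3$ be complex numbers with $z_j = a_j + b_j i$, $a_j \in \mathbb{R}$, $b_j > 0$ for $j = 1, 2, 3$. If $\lambda_0 + \lambda_1 - 2\sum_{j=1}^3 |z_j| \geq 0$, then there is an $8 \times 8$ normal centrosymmetric nonnegative matrix with eigenvalues $\lambda_0, \lambda_1, z_1, z_2, z_3, \overline{z}_1, \overline{z}_2, \overline{z}_3$.
   Context: $J$ is the $8 \times 8$ reverse identity matrix (ones on the anti-diagonal, zeros elsewhere). A matrix $Q$ is centrosymmetric if $JQJ = Q$, nonnegative if all entries are nonnegative, and normal if $QQ^* = Q^*Q$. *)

From HB Require Import structures.
From mathcomp Require Import all_boot all_order all_algebra.
From mathcomp Require Import complex.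
Set Implicit Arguments. Unset Strict Implicit. Unset Printing Implicit Defensive.
Import Order.TTheory GRing.Theory Num.Theory ComplexField.
Local Open Scope ring_scope.

Definition revid (R : nzRingType) (n : nat) : 'M[R]_n :=
  \matrix_(i < n, j < n) ((i + j)%N == n.-1)%:R.

Definition centrosymmetric (R : nzRingType) (n : nat) (Q : 'M[R]_n) : Prop :=
  revid R n *m Q *m revid R n = Q.

Definition nonneg_mx (R : numDomainType) (m n : nat) (Q : 'M[R]_(m, n)) : Prop :=
  forall i j, 0 <= Q i j.

(* Q is normal : Q Q^* = Q^* Q; for a real matrix Q^* = Q^T *)
Definition normal_real_mx (R : comNzRingType) (n : nat) (Q : 'M[R]_n) : Prop :=
  Q *m Q^T = Q^T *m Q.

Definition has_spectrum (R : rcfType) (n : nat) (Q : 'M[R]_n) (s : seq R[i]) : Prop :=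
  char_poly (map_mx (fun x : R => (x%:C)%C) Q) = \prod_(z <- s) ('X - z%:P).

(* Write Q = V^-1 D V with D = diag(lam0, lam1, z1, z2, z3, conj z1, conj z2, conj z3) and V the
   explicit matrix whose rows are (1,...,1), a real +-1 vector and three vectors with
   entries +-1 +- i together with their conjugates.  The rows of V are pairwise orthogonal,
   so Q is normal; each row is symmetric or skew-symmetric under reversal of coordinates,
   so Q commutes with the reversal J; and Q is real with entries
   (lam0 +- lam1 + 2 (+-x1 +- x2 +- x3)) / 8, x_j in {a_j, b_j}, which are nonnegative
   because |a_j|, |b_j| <= |z_j| and lam0 + lam1 >= 2 (|z1| + |z2| + |z3|). *)

From HB Require Import structures.
From mathcomp Require Import all_boot all_order all_algebra.
From mathcomp Require Import complex ring lra.
Import Order.TTheory GRing.Theory Num.Theory ComplexField.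
Set Implicit Arguments. Unset Strict Implicit. Unset Printing Implicit Defensive.
Local Open Scope ring_scope.
Local Open Scope complex_scope.

Lemma char_poly_similar (F : fieldType) n (V A B : 'M[F]_n) :
  V \in unitmx -> V *m A = B *m V -> char_poly A = char_poly B.
Proof.
move=> V_unit VA_BV.
pose C := @map_mx F {poly F} polyC n n.
have CVK : C (invmx V) *m C V = 1%:M by rewrite -map_mxM mulVmx // map_mx1.
rewrite /char_poly; have -> : char_poly_mx A = C (invmx V) *m char_poly_mx B *m C V.
  have -> : A = invmx V *m B *m V by rewrite -mulmxA -VA_BV mulmxA mulVmx ?mul1mx.
  rewrite /char_poly_mx !map_mxM -/C mulmxBr mulmxBl scalar_mxC.
  by rewrite -(mulmxA (scalar_mx _)) CVK mulmx1.
by rewrite !det_mulmx mulrAC -det_mulmx CVK det1 mul1r.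
Qed.

Lemma add2sum3_ge0 (R : realDomainType) (m x1 x2 x3 r1 r2 r3 : R) :
  2 * (r1 + r2 + r3) <= m -> `|x1| <= r1 -> `|x2| <= r2 -> `|x3| <= r3 ->
  0 <= m + 2 * (x1 + x2 + x3).
Proof. by move=> ? /ler_normlP[? ?] /ler_normlP[? ?] /ler_normlP[? ?]; lra. Qed.

Lemma normr_le_sqrt_sqrDl (R : rcfType) (a b : R) : `|a| <= Num.sqrt (a ^+ 2 + b ^+ 2).
Proof. by rewrite -sqrtr_sqr ler_wsqrtr // lerDl sqr_ge0. Qed.

Lemma normr_le_sqrt_sqrDr (R : rcfType) (a b : R) : `|b| <= Num.sqrt (a ^+ 2 + b ^+ 2).
Proof. by rewrite addrC normr_le_sqrt_sqrDl. Qed.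

Lemma sum_normc_le (R : rcfType) (l a1 b1 a2 b2 a3 b3 : R) :
  0 <= l%:C - 2%:R * (`|a1 +i* b1| + `|a2 +i* b2| + `|a3 +i* b3|) ->
  2 * (Num.sqrt (a1 ^+ 2 + b1 ^+ 2) + Num.sqrt (a2 ^+ 2 + b2 ^+ 2)
       + Num.sqrt (a3 ^+ 2 + b3 ^+ 2)) <= l.
Proof.
rewrite !normc_def /= -(rmorph_nat (real_complex R) 2) -!rmorphD -rmorphM.
by rewrite -rmorphB ler0c subr_ge0.
Qed.

Section ComplexifiedRealMatrices.
Variable R : rcfType.
Local Notation realc := (map_mx (real_complex R)).
Local Notation conjT A := (map_mx conjc A)^T.

Lemma conjT_mul m n p (A : 'M[R[i]]_(m, n)) (B : 'M[R[i]]_(n, p)) :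
  conjT (A *m B) = conjT B *m conjT A.
Proof. by rewrite map_mxM trmx_mul. Qed.

Lemma conjTK m n (A : 'M[R[i]]_(m, n)) : conjT (conjT A) = A.
Proof. by apply/matrixP => i j; rewrite !mxE conjcK. Qed.

Lemma conjT_diag n (x : 'rV[R[i]]_n) : conjT (diag_mx x) = diag_mx (map_mx conjc x).
Proof. by rewrite map_diag_mx tr_diag_mx. Qed.

Lemma conjT_realc m n (A : 'M[R]_(m, n)) : conjT (realc A) = (realc A)^T.
Proof. by congr trmx; apply/matrixP => i j; rewrite !mxE conjc_real. Qed.

Lemma realc_revid n : realc (revid R n) = revid R[i] n.
Proof. by apply/matrixP => i j; rewrite !mxE rmorph_nat. Qed.

Lemma has_spectrum_diagonalized n (s : seq R[i]) (Q : 'M[R]_n) (V : 'M[R[i]]_n) :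
    size s = n -> V \in unitmx -> V *m realc Q = diag_mx (\row_i s`_i) *m V ->
  has_spectrum Q s.
Proof.
move=> size_s V_unit V_eig; rewrite /has_spectrum (char_poly_similar V_unit V_eig).
rewrite char_poly_trig ?diag_mx_is_trig // (big_nth 0) size_s big_mkord.
by apply: eq_bigr => i _; rewrite !mxE eqxx.
Qed.

Section OrthogonalEigenbasis.
Variables (n : nat) (Q : 'M[R]_n) (V : 'M[R[i]]_n) (c : 'rV[R]_n) (d : 'rV[R[i]]_n).
Hypotheses (c_neq0 : forall i, c 0 i != 0)
  (V_orth : V *m conjT V = diag_mx (realc c))
  (V_eig : V *m realc Q = diag_mx d *m V).

Let Ci := diag_mx (realc (\row_i (c 0 i)^-1)).

Let V_rinv : V *m (conjT V *m Ci) = 1%:M.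
Proof.
rewrite mulmxA V_orth mulmx_diag -diag_const_mx; congr diag_mx.
by apply/rowP => i; rewrite !mxE -rmorphM mulfV.
Qed.

Lemma orthogonal_eigenbasis_unit : V \in unitmx.
Proof. by case/mulmx1_unit: V_rinv. Qed.

Let realc_Q : realc Q = conjT V *m diag_mx (\row_i ((c 0 i)^-1%:C * d 0 i)) *m V.
Proof.
have -> : diag_mx (\row_i ((c 0 i)^-1%:C * d 0 i)) = Ci *m diag_mx d.
  by rewrite mulmx_diag; congr diag_mx; apply/rowP => i; rewrite !mxE.
by rewrite mulmxA -mulmxA -V_eig mulmxA (mulmx1C V_rinv) mul1mx.
Qed.

Let conjT_sandwich (X : 'M[R[i]]_n) :
  conjT (conjT V *m X *m V) = conjT V *m conjT X *m V.
Proof. by rewrite !conjT_mul conjTK mulmxA. Qed.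

Let mulmx_sandwich (X Y : 'M[R[i]]_n) :
  (conjT V *m X *m V) *m (conjT V *m Y *m V) = conjT V *m (X *m diag_mx (realc c) *m Y) *m V.
Proof. by rewrite !mulmxA -(mulmxA _ V) V_orth. Qed.

Lemma normal_of_orthogonal_eigenbasis : normal_real_mx Q.
Proof.
apply: (map_mx_inj (f := real_complex R)).
rewrite !map_mxM -map_trmx -conjT_realc realc_Q conjT_sandwich conjT_diag !mulmx_sandwich !mulmx_diag.
by congr (_ *m diag_mx _ *m _); apply/rowP => i; rewrite !mxE; ring.
Qed.

End OrthogonalEigenbasis.

Lemma centrosymmetric_of_eigenbasis n (Q : 'M[R]_n) (V : 'M[R[i]]_n) (d s : 'rV[R[i]]_n) :
    V \in unitmx -> V *m realc Q = diag_mx d *m V ->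
    (forall i, s 0 i ^+ 2 = 1) -> V *m revid R[i] n = diag_mx s *m V ->
  centrosymmetric Q.
Proof.
move=> V_unit V_eig s_sqr V_rev; set W := invmx V.
have WV : W *m V = 1%:M by rewrite mulVmx.
have similar_mul X Y : W *m X *m V *m (W *m Y *m V) = W *m (X *m Y) *m V.
  by rewrite !mulmxA -(mulmxA _ V) mulmxV // mulmx1.
have Qc : realc Q = W *m diag_mx d *m V by rewrite -mulmxA -V_eig mulmxA WV mul1mx.
have J : revid R[i] n = W *m diag_mx s *m V by rewrite -mulmxA -V_rev mulmxA WV mul1mx.
apply: (map_mx_inj (f := real_complex R)).
rewrite !map_mxM realc_revid Qc J !similar_mul !mulmx_diag.
by congr (_ *m diag_mx _ *m _); apply/rowP => i; rewrite !mxE mulrAC -expr2 s_sqr mul1r.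
Qed.

End ComplexifiedRealMatrices.

Ltac case_ord8 i :=
  let lt_i8 := fresh "lt_i8" in case: i => [[|[|[|[|[|[|[|[|i]]]]]]]] lt_i8] //=.

Ltac complex_field :=
  apply/eqP; rewrite eq_complex /=; apply/andP; split; apply/eqP; field.

Section Eigenbasis.
Variable R : rcfType.

Definition eigvec_mx : 'M[R[i]]_8 := \matrix_(i < 8, j < 8) nth 0 (nth [::]
  (let u1 := [:: 1 -i* 1; -1 +i* 1; -1 -i* 1; 1 +i* 1; 1 +i* 1; -1 -i* 1; -1 +i* 1; 1 -i* 1] in
   let u2 := [:: 1 -i* 1; -1 -i* 1; 1 +i* 1; -1 +i* 1; 1 -i* 1; -1 -i* 1; 1 +i* 1; -1 +i* 1] in
   let u3 := [:: 1 -i* 1; 1 +i* 1; 1 +i* 1; 1 -i* 1; -1 +i* 1; -1 -i* 1; -1 -i* 1; -1 +i* 1] in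
   [:: nseq 8 (1 +i* 0);
       [:: 1 +i* 0; 1 +i* 0; -1 +i* 0; -1 +i* 0; -1 +i* 0; -1 +i* 0; 1 +i* 0; 1 +i* 0];
       u1; u2; u3; map conjc u1; map conjc u2; map conjc u3]) i) j.

Definition eigvec_sqnorm : 'rV[R]_8 := \row_i (if (i < 2)%N then 8 else 16).

Lemma eigvec_sqnorm_neq0 i : eigvec_sqnorm 0 i != 0.
Proof. by rewrite mxE; case: ifP; rewrite pnatr_eq0. Qed.

Lemma eigvec_mx_orthogonal :
  eigvec_mx *m (map_mx conjc eigvec_mx)^T = diag_mx (map_mx (real_complex R) eigvec_sqnorm).
Proof.
apply/matrixP => i j; rewrite !(big_ord_recl, big_ord0, mxE).
by case_ord8 i; case_ord8 j; rewrite ?mulr1n ?mulr0n; complex_field.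
Qed.

Lemma eigvec_mx_reversal :
  eigvec_mx *m revid R[i] 8 = diag_mx (\row_i [:: 1; 1; 1; -1; -1; 1; -1; -1]`_i) *m eigvec_mx.
Proof.
rewrite mul_diag_mx; apply/matrixP => i j; rewrite !(big_ord_recl, big_ord0, mxE).
by case_ord8 i; case_ord8 j; rewrite ?mulr1n ?mulr0n; complex_field.
Qed.

End Eigenbasis.

Section Construction.
Variables (R : rcfType) (l0 l1 a1 b1 a2 b2 a3 b3 : R).
Local Notation p := (l0 + l1).
Local Notation q := (l0 - l1).

(* The entries of V^-1 D V, with V = eigvec_mx and D the diagonal matrix of the
   prescribed spectrum. *)
Definition realizing_mx : 'M[R]_8 := 8^-1 *: \matrix_(i < 8, j < 8) nth 0 (nth [::]
  [:: [:: p + 2 * (a1 + a2 + a3); p + 2 * (- a1 + b2 - b3); q + 2 * (b1 - b2 - b3); q + 2 * (- b1 - a2 + a3);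
          q + 2 * (- b1 + a2 - a3); q + 2 * (b1 + b2 + b3); p + 2 * (- a1 - b2 + b3); p + 2 * (a1 - a2 - a3)];
      [:: p + 2 * (- a1 - b2 + b3); p + 2 * (a1 + a2 + a3); q + 2 * (- b1 - a2 + a3); q + 2 * (b1 + b2 + b3);
          q + 2 * (b1 - b2 - b3); q + 2 * (- b1 + a2 - a3); p + 2 * (a1 - a2 - a3); p + 2 * (- a1 + b2 - b3)];
      [:: q + 2 * (- b1 + b2 + b3); q + 2 * (b1 - a2 + a3); p + 2 * (a1 + a2 + a3); p + 2 * (- a1 - b2 + b3);
          p + 2 * (- a1 + b2 - b3); p + 2 * (a1 - a2 - a3); q + 2 * (b1 + a2 - a3); q + 2 * (- b1 - b2 - b3)];
      [:: q + 2 * (b1 - a2 + a3); q + 2 * (- b1 - b2 - b3); p + 2 * (- a1 + b2 - b3); p + 2 * (a1 + a2 + a3);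
          p + 2 * (a1 - a2 - a3); p + 2 * (- a1 - b2 + b3); q + 2 * (- b1 + b2 + b3); q + 2 * (b1 + a2 - a3)];
      [:: q + 2 * (b1 + a2 - a3); q + 2 * (- b1 + b2 + b3); p + 2 * (- a1 - b2 + b3); p + 2 * (a1 - a2 - a3);
          p + 2 * (a1 + a2 + a3); p + 2 * (- a1 + b2 - b3); q + 2 * (- b1 - b2 - b3); q + 2 * (b1 - a2 + a3)];
      [:: q + 2 * (- b1 - b2 - b3); q + 2 * (b1 + a2 - a3); p + 2 * (a1 - a2 - a3); p + 2 * (- a1 + b2 - b3);
          p + 2 * (- a1 - b2 + b3); p + 2 * (a1 + a2 + a3); q + 2 * (b1 - a2 + a3); q + 2 * (- b1 + b2 + b3)];
      [:: p + 2 * (- a1 + b2 - b3); p + 2 * (a1 - a2 - a3); q + 2 * (- b1 + a2 - a3); q + 2 * (b1 - b2 - b3);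
          q + 2 * (b1 + b2 + b3); q + 2 * (- b1 - a2 + a3); p + 2 * (a1 + a2 + a3); p + 2 * (- a1 - b2 + b3)];
      [:: p + 2 * (a1 - a2 - a3); p + 2 * (- a1 - b2 + b3); q + 2 * (b1 + b2 + b3); q + 2 * (- b1 + a2 - a3);
          q + 2 * (- b1 - a2 + a3); q + 2 * (b1 - b2 - b3); p + 2 * (- a1 + b2 - b3); p + 2 * (a1 + a2 + a3)]]
  i) j.

Lemma realizing_mx_nonneg (r1 r2 r3 : R) :
  l1 <= 0 -> 2 * (r1 + r2 + r3) <= l0 + l1 ->
  `|a1| <= r1 -> `|b1| <= r1 -> `|a2| <= r2 -> `|b2| <= r2 -> `|a3| <= r3 -> `|b3| <= r3 ->
  nonneg_mx realizing_mx.
Proof.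
move=> l1_le0 le_r_p *; have le_r_q : 2 * (r1 + r2 + r3) <= q by lra.
move=> i j; rewrite !mxE; apply: mulr_ge0; first by rewrite invr_ge0.
by case_ord8 i; case_ord8 j;
  first [apply: (add2sum3_ge0 le_r_p) | apply: (add2sum3_ge0 le_r_q)]; rewrite ?normrN.
Qed.

Lemma eigvec_mx_diagonalizes :
  eigvec_mx R *m map_mx (real_complex R) realizing_mx =
  diag_mx (\row_i [:: l0%:C; l1%:C; a1 +i* b1; a2 +i* b2; a3 +i* b3;
                      (a1 +i* b1)^*; (a2 +i* b2)^*; (a3 +i* b3)^*]`_i) *m eigvec_mx R.
Proof.
rewrite mul_diag_mx; apply/matrixP => i j; rewrite !(big_ord_recl, big_ord0, mxE).
by case_ord8 i; case_ord8 j; complex_field.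
Qed.

End Construction.

Theorem theorem3p12 (R : rcfType) (lam0 lam1 a1 a2 a3 b1 b2 b3 : R) :
  0 <= lam0 -> lam1 < 0 ->
  0 < b1 -> 0 < b2 -> 0 < b3 ->
  let z1 : R[i] := a1 +i* b1 in
  let z2 : R[i] := a2 +i* b2 in
  let z3 : R[i] := a3 +i* b3 in
  0 <= (lam0 + lam1)%:C - 2%:R * (`|z1| + `|z2| + `|z3|) ->
  exists Q : 'M[R]_8,
    [/\ normal_real_mx Q, centrosymmetric Q, nonneg_mx Q &
        has_spectrum Q [:: lam0%:C; lam1%:C; z1; z2; z3; z1^*; z2^*; z3^*]].
Proof.
move=> _ lam1_lt0 _ _ _ z1 z2 z3 /sum_normc_le le_sum.
have V_orth := eigvec_mx_orthogonal R.
have V_eig := eigvec_mx_diagonalizes lam0 lam1 a1 b1 a2 b2 a3 b3.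
have V_unit := orthogonal_eigenbasis_unit (@eigvec_sqnorm_neq0 R) V_orth.
exists (realizing_mx lam0 lam1 a1 b1 a2 b2 a3 b3); split.
- exact: normal_of_orthogonal_eigenbasis (@eigvec_sqnorm_neq0 R) V_orth V_eig.
- apply: centrosymmetric_of_eigenbasis V_unit V_eig _ (eigvec_mx_reversal R).
  by move=> i; rewrite mxE; case_ord8 i; rewrite ?sqrrN expr1n.
- apply: realizing_mx_nonneg (ltW lam1_lt0) le_sum _ _ _ _ _ _;
    first [exact: normr_le_sqrt_sqrDl | exact: normr_le_sqrt_sqrDr].
- by apply: has_spectrum_diagonalized _ V_unit V_eig.
Qed.
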